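(* Let $S$ be an instance of 3-Partition (with $n_1\ge\cdots\ge n_{3m}$), let $1\le k\le 3m$, let $i_1,\dots,i_{3m-k+1}$ be natural numbers and $W=\prod_{j=1}^{3m-k+1}(a_1b^{i_j}a_2)$. Suppose an accepting computation of $w_S$ satisfying the V-Condition contains a subcomputation $$W\,\|\,v_{4k-3}D_kv_{4k-3}\,v_{4k-2}D_kv_{4k-2}\,T \;\vdash^*\; W'\,\|\,T,$$ where $T$ denotes the rest of the input string. Then $W'=W$ and $i_j\le n_k$ for all $j$. Conversely, if $i_j\le n_k$ for all $j$, then for any string $T$ there is a computation $W\,\|\,v_{4k-3}D_kv_{4k-3}\,v_{4k-2}D_kv_{4k-2}\,T\vdash^* W\,\|\,T$.
   Context: Queue automaton: a configuration is written $Q\,\|\,x$ ($Q$ = queue contents, $x$ = remaining input); a step from $Q\,\|\,\sigma x$ ($\sigma$ a symbol) goes either to $Q\sigma\,\|\,x$ (push the input symbol) or, if $Q=\sigma Q'$, to $Q'\,\|\,x$ (the input symbol is matched against the leftmost queue symbol, which is popped; that queue symbol was pushed from an earlier input position, and we say these two input occurrences are matched). $\vdash^*$ is zero or more steps; $\varepsilon$ is the empty string; an accepting computation of $w$ is a computation $\varepsilon\,\|\,w\vdash^*\varepsilon\,\|\,\varepsilon$. An instance of 3-Partition is a sequence $S=\langle n_i:1\le i\le 3m\rangle$ of natural numbers such that $B=(\sum_{i=1}^{3m}n_i)/m$ is an integer and $B/4<n_i<B/2$ for all $i$; throughout, the $n_i$ are in non-increasing order. Alphabet $\{a_1,a_2,b,e_0,e,c_1,c_2,x,y\}$;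 $u^i$ is $i$ copies of $u$ concatenated, $\prod_{\ell=1}^k u_\ell=u_1\cdots u_k$. Define $U_\ell=a_1^2b^\ell a_2^2$, $v_\ell=c_1x^\ell y^\ell c_2$, $D_k=U_{n_k}^{3m-k+1}$, $E_k=U_B^{3m-k}\,a_1b^{n_k}a_2\,U_B^{3m-k}$, $F_k=U_B^{2(3m-k)}$, $\mathrm{Load}_S=e_0\prod_{i=1}^m(b^{2B}e)$, $\mathrm{Dist}_S=e_0\prod_{i=1}^m((a_1b^Ba_2)^3e)$, $\mathrm{Ver}_S=\prod_{k=1}^{3m}[v_{4k-3}D_kv_{4k-3}\,v_{4k-2}D_kv_{4k-2}\,v_{4k-1}E_kv_{4k-1}\,v_{4k}F_kv_{4k}]$, $w_S=\mathrm{Load}_S\mathrm{Dist}_S\mathrm{Ver}_S$. Each $v_\ell$ ($1\le\ell\le12m$) occurs exactly twice in $w_S$. An accepting computation of $w_S$ satisfies the V-Condition if for each $\ell$ with $1\le\ell\le 12m$, the symbols of the second occurrence of $v_\ell$ in $w_S$ are all matched against the corresponding symbols of the first occurrence of $v_\ell$ in $w_S$. *)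

From HB Require Import structures.
From mathcomp Require Import all_boot.
Set Implicit Arguments. Unset Strict Implicit. Unset Printing Implicit Defensive.

Inductive sym := a1 | a2 | sb | se0 | se | c1 | c2 | sx | sy.
Definition sym_eq_dec : comparable sym. Proof. move=> u v; rewrite /decidable; decide equality. Defined.
HB.instance Definition _ := comparableMixin sym_eq_dec.

Notation word := (seq sym).

Definition wpow (u : word) (i : nat) : word := flatten (nseq i u).
Definition wprod (k : nat) (u : nat -> word) : word := flatten [seq u l | l <- iota 1 k].

Definition nS (S : seq nat) (i : nat) : nat := nth 0 S i.-1.
Definition Bof (m : nat) (S : seq nat) : nat := sumn S %/ m.

(* An instance of 3-Partition with the n_i in non-increasing order;
   B/4 < n_i < B/2 is written 4 n_i > B and 2 n_i < B. *)
Definition is3Part (m : nat) (S : seq nat) : Prop :=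
  [/\ 0 < m, size S = 3 * m, m %| sumn S,
      sorted geq S &
      forall i, 1 <= i <= 3 * m -> Bof m S < 4 * nS S i /\ 2 * nS S i < Bof m S].

Definition Uw (l : nat) : word := [:: a1; a1] ++ nseq l sb ++ [:: a2; a2].
Definition vw (l : nat) : word := [:: c1] ++ nseq l sx ++ nseq l sy ++ [:: c2].

Section Strings.
Variables (m : nat) (S : seq nat).
Local Notation B := (Bof m S).
Local Notation n := (nS S).

Definition Dw (k : nat) : word := wpow (Uw (n k)) (3 * m - k + 1).
Definition Ew (k : nat) : word :=
  wpow (Uw B) (3 * m - k) ++ [:: a1] ++ nseq (n k) sb ++ [:: a2] ++ wpow (Uw B) (3 * m - k).
Definition Fw (k : nat) : word := wpow (Uw B) (2 * (3 * m - k)).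
Definition Load : word := se0 :: wprod m (fun _ => nseq (2 * B) sb ++ [:: se]).
Definition Dist : word :=
  se0 :: wprod m (fun _ => wpow ([:: a1] ++ nseq B sb ++ [:: a2]) 3 ++ [:: se]).
Definition Ver : word :=
  wprod (3 * m) (fun k =>
    vw (4 * k - 3) ++ Dw k ++ vw (4 * k - 3) ++
    vw (4 * k - 2) ++ Dw k ++ vw (4 * k - 2) ++
    vw (4 * k - 1) ++ Ew k ++ vw (4 * k - 1) ++
    vw (4 * k) ++ Fw k ++ vw (4 * k)).
Definition wS : word := Load ++ Dist ++ Ver.
End Strings.

Definition config := (word * word)%type.

Inductive step : config -> config -> Prop :=
| step_push (Q : word) (s : sym) (x : word) : step (Q, s :: x) (rcons Q s, x)
| step_pop (Q : word) (s : sym) (x : word) : step (s :: Q, s :: x) (Q, x).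

Inductive steps : config -> config -> Prop :=
| steps_refl c : steps c c
| steps_cons c1 c2 c3 : step c1 c2 -> steps c2 c3 -> steps c1 c3.

(* ---------- computations with matching information ----------
   A computation of w is given by the queue contents at each time t
   (0 <= t <= |w|), where each queue entry is recorded by the input
   position (0-based) from which it was pushed.  Step t consumes input symbol
   at position t, either pushing it, or popping the front queue symbol
   (pushed from position q), in which case positions q and t are matched. *)
Definition queue_at (w : word) (tq : nat -> seq nat) (t : nat) : word :=
  map (fun p => nth a1 w p) (tq t).

Definition config_at (w : word) (tq : nat -> seq nat) (t : nat) : config :=
  (queue_at w tq t, drop t w).

Definition valid_step (w : word) (tq : nat -> seq nat) (t : nat) : Prop :=
  tq t.+1 = rcons (tq t) t \/
  exists q, tq t = q :: tq t.+1 /\ nth a1 w q = nth a1 w t.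

Definition accepting (w : word) (tq : nat -> seq nat) : Prop :=
  [/\ tq 0 = [::], tq (size w) = [::] &
      forall t, t < size w -> valid_step w tq t].

Definition matched (tq : nat -> seq nat) (p q : nat) : Prop :=
  tq q = p :: tq q.+1.

Definition occurs_at (w v : word) (s : nat) : bool := take (size v) (drop s w) == v.
Definition first_occ (w v : word) : nat := find (occurs_at w v) (iota 0 (size w)).
Definition second_occ (w v : word) : nat :=
  (first_occ w v).+1 + find (occurs_at w v) (iota (first_occ w v).+1 (size w)).

Definition VCondition (m : nat) (S : seq nat) (tq : nat -> seq nat) : Prop :=
  forall l, 1 <= l <= 12 * m ->
    forall i, i < size (vw l) ->
      matched tq (first_occ (wS m S) (vw l) + i) (second_occ (wS m S) (vw l) + i).

Definition Ww (ii : seq nat) : word := flatten [seq [:: a1] ++ nseq i sb ++ [:: a2] | i <- ii].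

Definition Xw (m : nat) (S : seq nat) (k : nat) : word :=
  vw (4 * k - 3) ++ Dw m S k ++ vw (4 * k - 3) ++ vw (4 * k - 2) ++ Dw m S k ++ vw (4 * k - 2).

From Pilot Require Import Defs.
From HB Require Import structures.
From mathcomp Require Import all_boot.
From mathcomp Require Import zify.
Set Implicit Arguments. Unset Strict Implicit.

(* Reading v_l enqueues it behind W.  By the V-Condition the second copy of v_l is
   matched against the first, so the marker c1 at the head of v_l reaches the front
   of the queue exactly when the second copy starts: while reading D_k in between,
   all of W is consumed and what D_k does not consume is enqueued.  As W and D_k
   have the same number 3m-k+1 of blocks and each input block a1 a1 b^{n_k} a2 a2
   can absorb at most one queue block a1 b^{i_j} a2, block j of D_k consumes block
   j of W, which forces i_j <= n_k and leaves a1 b^{n_k - i_j} a2 behind; the second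
   round complements once more and restores W.  The V-Condition can be applied to
   these copies of v_l because each v_l occurs exactly twice in w_S.  Conversely,
   that block-by-block schedule is a computation. *)

Lemma steps_trans c c' c'' : steps c c' -> steps c' c'' -> steps c c''.
Proof. by elim=> // x y z xy _ IH /IH; apply: steps_cons xy. Qed.

Lemma steps_push (Q u T : word) : steps (Q, u ++ T) (Q ++ u, T).
Proof.
elim: u Q => [|s u IH] Q; first by rewrite cats0; apply: steps_refl.
by apply: steps_cons (step_push Q s (u ++ T)) _; rewrite -cat_rcons.
Qed.

Lemma steps_pop (Q u T : word) : steps (u ++ Q, u ++ T) (Q, T).
Proof.
elim: u => [|s u IH]; first exact: steps_refl.
exact: steps_cons (step_pop (u ++ Q) s (u ++ T)) IH.
Qed.

Lemma steps_pop_push (s : sym) (Q T : word) : steps (s :: Q, s :: s :: T) (rcons Q s, T).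
Proof.
apply: steps_cons (step_pop Q s (s :: T)) _.
exact: steps_cons (step_push Q s T) (steps_refl _).
Qed.

Lemma wpowS u r : wpow u r.+1 = u ++ wpow u r.
Proof. by []. Qed.

Lemma Ww_cons i jj : Ww (i :: jj) = a1 :: nseq i sb ++ a2 :: Ww jj.
Proof. by rewrite /Ww /= -catA. Qed.

Lemma steps_wpowUw n (jj : seq nat) (Z T : word) : (forall j, j \in jj -> j <= n) ->
  steps (Ww jj ++ Z, wpow (Uw n) (size jj) ++ T) (Z ++ Ww [seq n - j | j <- jj], T).
Proof.
elim: jj Z => [|i jj IH] Z le_jj_n; first by rewrite cats0; apply: steps_refl.
have le_in : i <= n by apply: le_jj_n; rewrite mem_head.
rewrite [size _]/= wpowS -catA; set R := wpow _ _ ++ T.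
rewrite Ww_cons /Uw (_ : nseq n sb = nseq i sb ++ nseq (n - i) sb); last first.
  by rewrite -nseqD subnKC.
rewrite -!catA /=; apply: steps_trans (steps_pop_push _ _ _) _.
rewrite -catA rcons_cat; apply: steps_trans (steps_pop _ _ _) _.
apply: steps_trans (steps_push _ _ _) _.
rewrite rcons_cons cat_cons; apply: steps_trans (steps_pop_push _ _ _) _.
rewrite -!cats1 -!catA; apply: steps_trans (IH _ _) _.
  by move=> j jj_j; apply: le_jj_n; rewrite inE jj_j orbT.
by rewrite /= Ww_cons -!catA cat_cons -catA; apply: steps_refl.
Qed.

Lemma map_subnK n (ii : seq nat) : (forall j, j \in ii -> j <= n) ->
  [seq n - j | j <- [seq n - j | j <- ii]] = ii.
Proof.
move=> le_ii_n; rewrite -map_comp -[RHS]map_id.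
by apply/eq_in_map => j /le_ii_n le_jn /=; rewrite subKn.
Qed.

Lemma Xw_catE m S k T : Xw m S k ++ T =
  vw (4 * k - 3) ++ Dw m S k ++ vw (4 * k - 3) ++
  vw (4 * k - 2) ++ Dw m S k ++ vw (4 * k - 2) ++ T.
Proof. by rewrite /Xw !catA. Qed.

Lemma steps_Xw m S k (ii : seq nat) : size ii = 3 * m - k + 1 ->
  (forall j, j \in ii -> j <= nS S k) ->
  forall T : seq sym, steps (Ww ii, Xw m S k ++ T) (Ww ii, T).
Proof.
move=> size_ii le_ii T; set n := nS S k.
rewrite Xw_catE (_ : Dw m S k = wpow (Uw n) (size ii)); last by rewrite size_ii.
apply: steps_trans (steps_push _ _ _) _.
apply: steps_trans (steps_wpowUw _ _ le_ii) _.
apply: steps_trans (steps_pop _ _ _) _.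
apply: steps_trans (steps_push _ _ _) _.
have le_jj : forall j, j \in [seq n - j | j <- ii] -> j <= n.
  by move=> j /mapP [x _ ->]; apply: leq_subr.
rewrite -(size_map (fun j => n - j) ii).
apply: steps_trans (steps_wpowUw _ _ le_jj) _.
rewrite map_subnK //; exact: steps_pop.
Qed.

Definition erase_b (w : word) : word := filter (predC1 sb) w.

Lemma subseq_erase_b w w' : subseq w w' -> subseq (erase_b w) (erase_b w').
Proof.
move=> sub_ww'; rewrite /erase_b subseq_filter filter_all /=.
exact: subseq_trans (filter_subseq _ _) sub_ww'.
Qed.

Lemma erase_b_wpowUw n r : erase_b (wpow (Uw n) r) = wpow [:: a1; a1; a2; a2] r.
Proof.
by elim: r => [|r IH] //; rewrite !wpowS -IH /erase_b filter_cat /Uw /= filter_cat filter_nseq.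
Qed.

Lemma erase_b_Ww jj : erase_b (Ww jj) = wpow [:: a1; a2] (size jj).
Proof.
by elim: jj => [|j jj IH] //; rewrite Ww_cons /= wpowS -IH /erase_b /= filter_cat filter_nseq.
Qed.

(* Matching greedily, each block a1 a1 a2 a2 absorbs at most one pair a1 a2. *)
Lemma not_subseq_wpow12 r : ~~ subseq (wpow [:: a1; a2] r.+1) (wpow [:: a1; a1; a2; a2] r).
Proof. by elim: r. Qed.

Lemma not_subseq_a2_wpow12 r : ~~ subseq (a2 :: wpow [:: a1; a2] r) (wpow [:: a1; a1; a2; a2] r).
Proof. by case: r => [|r] //; apply: not_subseq_wpow12. Qed.

Lemma mask_nseq (T : Type) (mb : bitseq) (z : T) :
  mask mb (nseq (size mb) z) = nseq (count id mb) z /\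
  mask (map negb mb) (nseq (size mb) z) = nseq (size mb - count id mb) z.
Proof.
elim: mb => [|x mb [IH1 IH2]] //=; rewrite IH1 IH2; case: x => //=.
by rewrite add0n subSn ?count_size.
Qed.

Lemma mask_Uw n (mb : bitseq) : size mb = size (Uw n) ->
  exists p q s, [/\ q <= n,
     mask mb (Uw n) = nseq p a1 ++ nseq q sb ++ nseq s a2 &
     mask (map negb mb) (Uw n) = nseq (2 - p) a1 ++ nseq (n - q) sb ++ nseq (2 - s) a2].
Proof.
rewrite /Uw /= size_cat size_nseq.
case: mb => [|x1 [|x2 mb]] //= [] size_mb.
rewrite -(cat_take_drop n mb).
have: size (take n mb) = n by rewrite size_take size_mb; case: ifP; lia.
have: size (drop n mb) = 2 by rewrite size_drop size_mb; lia.
move: (take n mb) (drop n mb) => mb1 [|y1 [|y2 [|? ?]]] // _ size_mb1.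
have [mask_b mask_negb] := mask_nseq mb1 sb; rewrite size_mb1 in mask_b mask_negb.
rewrite map_cat !mask_cat ?size_map ?size_mb1 ?size_nseq // mask_b mask_negb.
exists (x1 + x2), (count id mb1), (y1 + y2); split.
- by rewrite -[X in _ <= X]size_mb1 count_size.
- by case: x1; case: x2; case: y1; case: y2.
- by case: x1; case: x2; case: y1; case: y2.
Qed.

Lemma nth_a1_b_a2 p q s j :
  nth a1 (nseq p a1 ++ nseq q sb ++ nseq s a2) j = a2 -> p + q <= j.
Proof.
rewrite nth_cat size_nseq; case: ifP => lt_jp; first by rewrite nth_nseq lt_jp.
rewrite nth_cat size_nseq; case: ifP => lt_jq; first by rewrite nth_nseq lt_jq.
by move=> _; lia.
Qed.

Lemma nth_a1_b_a2_tail p q s j : p + q <= j < p + q + s ->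
  nth a1 (nseq p a1 ++ nseq q sb ++ nseq s a2) j = a2.
Proof.
move=> le_j; rewrite nth_cat size_nseq ifF; last by lia.
by rewrite nth_cat size_nseq ifF ?nth_nseq ?ifT //; lia.
Qed.

(* In the block-by-block reading of (a1 a1 b^n a2 a2)^r against W, one block of
   the input yields exactly one block a1 b^i a2 of W: fewer would leave a2 W to be
   found in r blocks, more would put an a1 after an a2. *)
Lemma mask_Uw_block n i jj (mb : bitseq) (Z : word) :
  size mb = size (Uw n) -> subseq Z (wpow (Uw n) (size jj)) ->
  mask mb (Uw n) ++ Z = a1 :: nseq i sb ++ a2 :: Ww jj ->
  mask mb (Uw n) = a1 :: nseq i sb ++ [:: a2].
Proof.
move=> size_mb sub_Z eqW.
have [p [q [s [_ shapeP _]]]] := mask_Uw size_mb.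
set P := mask mb (Uw n) in eqW shapeP *.
have size_P : size P = p + q + s by rewrite shapeP !size_cat !size_nseq addnA.
case: (ltngtP (size P) i.+2) => cmp_P.
- have: subseq (a2 :: Ww jj) Z.
    have := f_equal (drop (size P)) eqW; rewrite drop_size_cat // => ->.
    rewrite -[a1 :: _]/((a1 :: nseq i sb) ++ _) drop_cat /= size_nseq.
    case: ifP => _; first exact: suffix_subseq.
    by rewrite (_ : size P - i.+1 = 0) ?drop0 //; lia.
  move=> /subseq_trans /(_ sub_Z) /subseq_erase_b.
  by rewrite /= erase_b_Ww erase_b_wpowUw (negbTE (not_subseq_a2_wpow12 _)).
- case: jj eqW sub_Z => [|j jj] eqW _.
    by have := f_equal size eqW; rewrite size_cat /= size_cat size_nseq /=; lia.
  have nthP k : k < size P -> nth a1 P k = nth a1 (a1 :: nseq i sb ++ a2 :: Ww (j :: jj)) k.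
    by move=> lt_k; rewrite -eqW nth_cat lt_k.
  have P_a2 : nth a1 P i.+1 = a2.
    by rewrite nthP ?(ltnW cmp_P) //= nth_cat size_nseq ltnn subnn.
  have P_a1 : nth a1 P i.+2 = a1.
    by rewrite nthP //= nth_cat size_nseq ltnNge leqnSn /= subSn // subnn Ww_cons.
  move: P_a1 P_a2; rewrite shapeP => + /nth_a1_b_a2 le_pq.
  by rewrite nth_a1_b_a2_tail //; lia.
- have := f_equal (take (size P)) eqW; rewrite take_size_cat // => ->.
  by rewrite cmp_P /= take_cat size_nseq ltnNge leqnSn /= subSnn take_cons take0.
Qed.

Lemma mask_Uw_complement n i (mb : bitseq) : size mb = size (Uw n) ->
  mask mb (Uw n) = a1 :: nseq i sb ++ [:: a2] ->
  i <= n /\ mask (map negb mb) (Uw n) = a1 :: nseq (n - i) sb ++ [:: a2].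
Proof.
move=> /mask_Uw [p [q [s [le_qn -> ->]]]] eq_block.
have count_in x := f_equal (count (pred1 x)) eq_block.
move: (count_in a1) (count_in sb) (count_in a2).
rewrite /= !count_cat !count_nseq /= => cnt_a1 cnt_b cnt_a2.
have [-> -> ->] : [/\ p = 1, q = i & s = 1] by split; lia.
by split => //; lia.
Qed.

Lemma mask_wpowUw_Ww n jj (mb : bitseq) :
  size mb = size (wpow (Uw n) (size jj)) ->
  mask mb (wpow (Uw n) (size jj)) = Ww jj ->
  (forall j, j \in jj -> j <= n) /\
  mask (map negb mb) (wpow (Uw n) (size jj)) = Ww [seq n - j | j <- jj].
Proof.
elim: jj mb => [|i jj IH] mb; first by case: mb.
change (size (i :: jj)) with (size jj).+1; rewrite wpowS size_cat => size_mb.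
rewrite -(cat_take_drop (size (Uw n)) mb).
have: size (take (size (Uw n)) mb) = size (Uw n) by rewrite size_take size_mb; case: ifP; lia.
have: size (drop (size (Uw n)) mb) = size (wpow (Uw n) (size jj)) by rewrite size_drop size_mb; lia.
move: (take _ mb) (drop _ mb) => mb1 mb2 size_mb2 size_mb1.
rewrite map_cat !mask_cat ?size_map // Ww_cons => eqW.
have block := mask_Uw_block size_mb1 (mask_subseq _ _) eqW.
have [le_in block'] := mask_Uw_complement size_mb1 block.
have eqW_rest : mask mb2 (wpow (Uw n) (size jj)) = Ww jj.
  have splitW : a1 :: nseq i sb ++ a2 :: Ww jj = (a1 :: nseq i sb ++ [:: a2]) ++ Ww jj.
    by rewrite cat_cons -catA.
  by move/eqP: eqW; rewrite block splitW eqseq_cat // => /andP [_ /eqP].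
have [le_jj ->] := IH _ size_mb2 eqW_rest.
split; first by move=> j; rewrite inE => /orP [/eqP -> | /le_jj].
by rewrite block' /= Ww_cons -catA.
Qed.

Lemma occurs_at_nth w v p j : occurs_at w v p -> j < size v -> nth a1 w (p + j) = nth a1 v j.
Proof. by move=> /eqP occ lt_j; rewrite -[in RHS]occ nth_take // nth_drop. Qed.

Lemma occurs_at_size w v p : 0 < size v -> occurs_at w v p -> p + size v <= size w.
Proof.
move=> v_gt0 /eqP/(f_equal size); rewrite size_take size_drop.
move: (size v) (size w) v_gt0 => a b; case: ifP => /=; lia.
Qed.

Lemma occurs_at_drop w v p T : drop p w = v ++ T -> occurs_at w v p.
Proof. by move=> drop_w; rewrite /occurs_at drop_w take_size_cat. Qed.

Lemma size_vw l : size (vw l) = (2 * l).+2.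
Proof. by rewrite /vw /= !size_cat !size_nseq /=; lia. Qed.

Lemma nth_vw_c1 l j : nth a1 (vw l) j = c1 -> j = 0.
Proof.
case: j => [|j] //=; rewrite nth_cat size_nseq; case: ifP => lt_jl.
  by rewrite nth_nseq lt_jl.
rewrite nth_cat size_nseq; case: ifP => lt_j2l; first by rewrite nth_nseq lt_j2l.
by case: (j - l - l) => [|[]].
Qed.

Lemma nth_vw_x l j : 0 < j <= l -> nth a1 (vw l) j = sx.
Proof. by case: j => [|j] //= lt_jl; rewrite nth_cat size_nseq lt_jl nth_nseq lt_jl. Qed.

Lemma nth_vw_succ l : nth a1 (vw l) l.+1 <> sx.
Proof. by rewrite /= nth_cat size_nseq ltnn subnn; case: l. Qed.

Lemma vw_prefix_inj l l' (rest : word) : occurs_at (vw l' ++ rest) (vw l) 0 -> l = l'.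
Proof.
move=> occ.
have nth_eq j : j < size (vw l) -> j < size (vw l') -> nth a1 (vw l) j = nth a1 (vw l') j.
  by move=> lt_j lt_j'; rewrite -(occurs_at_nth occ lt_j) add0n nth_cat lt_j'.
case: (ltngtP l l') => // cmp_ll'.
- by case: (@nth_vw_succ l); rewrite nth_eq ?size_vw ?nth_vw_x //; lia.
- by case: (@nth_vw_succ l'); rewrite -nth_eq ?size_vw ?nth_vw_x //; lia.
Qed.

(* The input is cut into pieces, each either free of c1 or some v_l; since c1 occurs
   in v_l only at its head, every occurrence of v_l is a whole piece. *)
Definition piece (u : word) : Prop := c1 \notin u \/ exists l, u = vw l.

Definition piece_start (ps : seq word) (i : nat) : nat := sumn (map size (take i ps)).

Lemma occurs_vw_flatten ps l p : (forall u, u \in ps -> piece u) ->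
  occurs_at (flatten ps) (vw l) p ->
  exists2 i, nth [::] ps i = vw l & p = piece_start ps i.
Proof.
have vw_gt0 : 0 < size (vw l) by rewrite size_vw.
elim: ps p => [|u ps IH] p pieces_ps occ.
  by have := occurs_at_size vw_gt0 occ; rewrite size_vw /=; lia.
have head_c1 := occurs_at_nth occ vw_gt0; rewrite addn0 /= in head_c1.
case: (ltnP p (size u)) => lt_pu.
- rewrite nth_cat lt_pu in head_c1.
  case: (pieces_ps u (mem_head _ _)) => [c1_u | [l' def_u]].
    by rewrite -head_c1 mem_nth in c1_u.
  subst u; have p0 := nth_vw_c1 head_c1; subst p.
  by exists 0 => //=; rewrite (vw_prefix_inj occ).
- have occ' : occurs_at (flatten ps) (vw l) (p - size u).
    by move: occ; rewrite /occurs_at /= drop_cat ltnNge lt_pu.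
  have [|i ps_i eq_p] := IH _ _ occ'.
    by move=> x ps_x; apply: pieces_ps; rewrite inE ps_x orbT.
  by exists i.+1 => //; rewrite /piece_start /= -[sumn _]eq_p subnKC.
Qed.

Lemma size_filter_nth_iota (T : eqType) (x0 v : T) (s : seq T) :
  size [seq i <- iota 0 (size s) | nth x0 s i == v] = count (pred1 v) s.
Proof. by rewrite size_filter -[in RHS](mkseq_nth x0 s) /mkseq count_map. Qed.

Lemma occurs_vw_twice ps l : (forall u, u \in ps -> piece u) ->
  count (pred1 (vw l)) ps = 2 ->
  exists P1 P2, forall p, occurs_at (flatten ps) (vw l) p -> p = P1 \/ p = P2.
Proof.
move=> pieces_ps; rewrite -(size_filter_nth_iota [::]).
set idx := [seq i <- _ | _].
have mem_idx i : (i \in idx) = (nth [::] ps i == vw l) && (i \in iota 0 (size ps)).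
  by rewrite mem_filter.
case: idx mem_idx => [|i1 [|i2 [|? ?]]] // mem_idx _.
exists (piece_start ps i1), (piece_start ps i2) => p /(occurs_vw_flatten pieces_ps) [i ps_i ->].
have: i \in [:: i1; i2].
  rewrite mem_idx ps_i eqxx mem_iota /=.
  by case: ltnP => // /(nth_default [::]); rewrite ps_i => /(f_equal size); rewrite size_vw.
by rewrite !inE => /orP [] /eqP ->; [left | right].
Qed.

Lemma find_iota (a : pred nat) s n q : s <= q < s + n -> a q ->
  (forall p, s <= p < q -> ~~ a p) -> find a (iota s n) = q - s.
Proof.
elim: n s => [|n IH] s rng_q a_q before_q; first by lia.
rewrite /=; case: ifP => a_s.
  suff: ~~ (s < q) by lia.
  by apply/negP => lt_sq; have := before_q s; rewrite leqnn lt_sq a_s => /(_ isT).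
have ne_sq : s != q by apply/eqP => eq_sq; rewrite eq_sq a_q in a_s.
rewrite IH //; [lia | lia | by move=> p rng_p; apply: before_q; lia].
Qed.

Lemma first_second_occ w v t t' :
  (exists P1 P2, forall p, occurs_at w v p -> p = P1 \/ p = P2) ->
  occurs_at w v t -> occurs_at w v t' -> t < t' -> t' < size w ->
  first_occ w v = t /\ second_occ w v = t'.
Proof.
move=> [P1 [P2 occP]] occ_t occ_t' lt_tt' lt_t'w.
have occ_tt' p : occurs_at w v p -> p = t \/ p = t'.
  by move=> occ_p; move: (occP p occ_p) (occP t occ_t) (occP t' occ_t'); lia.
have first_t : first_occ w v = t.
  rewrite /first_occ (@find_iota _ 0 _ t) ?subn0 //; first lia.
  by move=> p rng_p; apply/negP => /occ_tt'; lia.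
split => //; rewrite /second_occ first_t (@find_iota _ t.+1 _ t') //; first lia.
- lia.
- by move=> p rng_p; apply/negP => /occ_tt'; lia.
Qed.

Section Pieces.
Variables (m : nat) (S : seq nat).

Definition Ver_block (k : nat) : seq word :=
  [:: vw (4 * k - 3); Dw m S k; vw (4 * k - 3); vw (4 * k - 2); Dw m S k; vw (4 * k - 2);
      vw (4 * k - 1); Ew m S k; vw (4 * k - 1); vw (4 * k); Fw m S k; vw (4 * k)].

Definition wS_pieces (N : nat) : seq word :=
  Defs.Load m S :: Dist m S :: flatten [seq Ver_block k | k <- iota 1 N].

Lemma wS_flatten : wS m S = flatten (wS_pieces (3 * m)).
Proof.
have flatten_cons (u : word) us : flatten (u :: us) = u ++ flatten us by [].
rewrite /wS /Ver /wprod /wS_pieces !flatten_cons; congr (_ ++ (_ ++ _)).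
elim: (iota 1 (3 * m)) => [|k ks IH] //.
rewrite -[in RHS]/(flatten (Ver_block k ++ flatten [seq Ver_block k | k <- ks])) flatten_cat -IH.
by rewrite map_cons flatten_cons /Ver_block !flatten_cons cats0.
Qed.

Lemma c1_notin_wpow u r : c1 \notin u -> c1 \notin wpow u r.
Proof. by move=> c1_u; apply/negP => /flattenP [s /nseqP [-> _]]; apply/negP. Qed.

Lemma c1_notin_wprod r f : (forall l, c1 \notin f l) -> c1 \notin wprod r f.
Proof. by move=> c1_f; apply/negP => /flattenP [s /mapP [l _ ->]]; apply/negP. Qed.

Lemma c1_notin_Uw n : c1 \notin Uw n.
Proof. by rewrite /Uw !mem_cat mem_nseq !inE andbF. Qed.

Lemma c1_notin_Load : c1 \notin Defs.Load m S.
Proof. by rewrite inE /=; apply: c1_notin_wprod => l; rewrite mem_cat mem_nseq !inE andbF. Qed.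

Lemma c1_notin_Dist : c1 \notin Dist m S.
Proof. by rewrite inE /=; apply: c1_notin_wprod => l; rewrite !(inE, mem_cat, mem_nseq, andbF). Qed.

Lemma c1_notin_Dw k : c1 \notin Dw m S k.
Proof. exact/c1_notin_wpow/c1_notin_Uw. Qed.

Lemma c1_notin_Ew k : c1 \notin Ew m S k.
Proof. by rewrite /Ew !mem_cat !(negbTE (c1_notin_wpow _ (c1_notin_Uw _))) mem_nseq !inE andbF. Qed.

Lemma c1_notin_Fw k : c1 \notin Fw m S k.
Proof. exact/c1_notin_wpow/c1_notin_Uw. Qed.

Lemma c1_free_eq_vw (u : word) l : c1 \notin u -> (u == vw l) = false.
Proof. by move=> c1_u; apply/eqP => def_u; rewrite def_u inE eqxx in c1_u. Qed.

Lemma vw_inj : injective vw.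
Proof. by move=> l l' /(f_equal size); rewrite !size_vw; lia. Qed.

Lemma pieces_wS_pieces N u : u \in wS_pieces N -> piece u.
Proof.
have vw_piece l : piece (vw l) by right; exists l.
rewrite !inE => /or3P [/eqP -> | /eqP -> | /flattenP [bl /mapP [k _ ->]]].
- by left; apply: c1_notin_Load.
- by left; apply: c1_notin_Dist.
rewrite !inE => u_in; repeat case/orP: u_in => u_in; move/eqP: u_in => ->;
  by [apply: vw_piece | left; rewrite ?c1_notin_Dw ?c1_notin_Ew ?c1_notin_Fw].
Qed.

Lemma count_vw_Ver_block l k : count (pred1 (vw l)) (Ver_block k) =
  2 * ((l == 4 * k - 3) + (l == 4 * k - 2) + (l == 4 * k - 1) + (l == 4 * k)).
Proof.
rewrite /Ver_block /= !(inj_eq vw_inj).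
by rewrite !c1_free_eq_vw ?c1_notin_Dw ?c1_notin_Ew ?c1_notin_Fw //; lia.
Qed.

Lemma count_vw_wS_pieces l N : 1 <= l <= 4 * N -> count (pred1 (vw l)) (wS_pieces N) = 2.
Proof.
rewrite /wS_pieces /=.
suff -> : count (pred1 (vw l)) (flatten [seq Ver_block k | k <- iota 1 N]) = 2 * (0 < l <= 4 * N).
  by move=> ->.
elim: N => [|N IH]; first by rewrite /=; lia.
rewrite -[N.+1]addn1 iotaD map_cat flatten_cat count_cat IH.
by rewrite (_ : flatten _ = Ver_block (1 + N)) // count_vw_Ver_block; lia.
Qed.

End Pieces.

Lemma occurs_vw_wS m S l : 1 <= l <= 12 * m ->
  exists P1 P2, forall p, occurs_at (wS m S) (vw l) p -> p = P1 \/ p = P2.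
Proof.
move=> rng_l; rewrite wS_flatten; apply: occurs_vw_twice; first exact: pieces_wS_pieces.
by apply: count_vw_wS_pieces; lia.
Qed.

Lemma a1_notin_vw l : a1 \notin vw l.
Proof. by rewrite /vw !(inE, mem_cat, mem_nseq, andbF). Qed.

Lemma c1_notin_Ww jj : c1 \notin Ww jj.
Proof. by apply/flattenP => -[u /mapP [j _ ->]]; rewrite !(inE, mem_cat, mem_nseq, andbF). Qed.

Section Computation.
Variables (w : word) (tq : nat -> seq nat).
Hypothesis valid : forall t, t < size w -> valid_step w tq t.

Lemma drop_nth s (u rest : word) : drop s w = u ++ rest ->
  forall j, j < size u -> nth a1 w (s + j) = nth a1 u j.
Proof. by move=> drop_w j lt_j; rewrite -nth_drop drop_w nth_cat lt_j. Qed.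

Lemma drop_valid s (u rest : word) : drop s w = u ++ rest ->
  forall j, j < size u -> valid_step w tq (s + j).
Proof.
move=> drop_w j lt_j; apply: valid.
by have := f_equal size drop_w; rewrite size_drop size_cat; lia.
Qed.

Lemma tq_push_run s (u rest : word) q0 Q : drop s w = u ++ rest ->
  tq s = q0 :: Q -> nth a1 w q0 \notin u ->
  tq (s + size u) = q0 :: Q ++ iota s (size u).
Proof.
move=> drop_w tq_s q0_u.
suff: forall j, j <= size u -> tq (s + j) = q0 :: Q ++ iota s j by apply.
elim=> [|j IH] lt_j; first by rewrite addn0 tq_s cats0.
case: (drop_valid drop_w lt_j) => [push | [q [pop same_sym]]].
- by rewrite addnS push IH ?(ltnW lt_j) // -addn1 iotaD cats1 rcons_cons rcons_cat.
- move: pop; rewrite IH ?(ltnW lt_j) // => -[eq_q _]; subst q.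
  by move: q0_u; rewrite same_sym (drop_nth drop_w lt_j) mem_nth.
Qed.

(* Reading a factor D that does not contain the symbol of the marker v0: the
   symbols of D split, by some mask, into those matched against the queue
   segment X in front of the marker and those enqueued behind it. *)
Lemma tq_pass_invariant s (D rest : word) X v0 V : drop s w = D ++ rest ->
  tq s = X ++ v0 :: V -> nth a1 w v0 \notin D ->
  forall j, j <= size D -> exists mb j' R, [/\ size mb = j,
    tq (s + j) = drop j' X ++ v0 :: V ++ R,
    mask mb (take j D) = map (nth a1 w) (take j' X) &
    mask (map negb mb) (take j D) = map (nth a1 w) R].
Proof.
move=> drop_w tq_s v0_D; elim=> [|j IH] lt_j.
  by exists [::], 0, [::]; split; rewrite ?addn0 ?tq_s ?drop0 ?take0 ?cats0.
have [mb [j' [R [size_mb tq_j mask_X mask_R]]]] := IH (ltnW lt_j).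
have size_mbD : size mb = size (take j D) by rewrite size_take lt_j.
rewrite (take_nth a1 lt_j) -(drop_nth drop_w lt_j).
case: (drop_valid drop_w lt_j) => [push | [q [pop same_sym]]].
- exists (rcons mb false), j', (rcons R (s + j)); split.
  + by rewrite size_rcons size_mb.
  + by rewrite addnS push tq_j rcons_cat rcons_cons rcons_cat.
  + by rewrite mask_rcons // cats0.
  + by rewrite map_rcons mask_rcons ?size_map // mask_R map_rcons cats1.
- move: pop; rewrite tq_j; case def_X: (drop j' X) => [|x X'] /= [eq_q tq_j1]; subst q.
    by move: v0_D; rewrite same_sym (drop_nth drop_w lt_j) mem_nth.
  have lt_j'X : j' < size X by rewrite ltnNge -subn_eq0 -size_drop def_X.
  have nth_X : nth 0 X j' = x by rewrite -[j']addn0 -nth_drop def_X.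
  exists (rcons mb true), j'.+1, R; split.
  + by rewrite size_rcons size_mb.
  + by rewrite addnS -tq_j1 -add1n -drop_drop def_X drop1.
  + by rewrite mask_rcons // mask_X (take_nth 0 lt_j'X) map_rcons nth_X same_sym cats1.
  + by rewrite map_rcons mask_rcons ?size_map // cats0.
Qed.

Lemma tq_pass s (D rest : word) X v0 V R : drop s w = D ++ rest ->
  tq s = X ++ v0 :: V -> tq (s + size D) = v0 :: V ++ R ->
  nth a1 w v0 \notin D -> nth a1 w v0 \notin map (nth a1 w) X ->
  exists mb, [/\ size mb = size D, mask mb D = map (nth a1 w) X &
                mask (map negb mb) D = map (nth a1 w) R].
Proof.
move=> drop_w tq_s tq_e v0_D v0_X.
have [mb [j' [R' [size_mb]]]] := tq_pass_invariant drop_w tq_s v0_D (leqnn _).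
rewrite tq_e !take_size; case def_X: (drop j' X) => [|x X'] /= [].
- move=> /(f_equal (drop (size V))); rewrite !drop_size_cat // => <- mask_X mask_R.
  exists mb; split => //; rewrite mask_X take_oversize //.
  by rewrite -subn_eq0 -size_drop def_X.
- move=> eq_x; subst x; have: v0 \in X by rewrite -(cat_take_drop j' X) mem_cat def_X mem_head orbT.
  by move=> /(map_f (nth a1 w)); rewrite (negbTE v0_X).
Qed.

Lemma drop_shift s (u rest : word) : drop s w = u ++ rest -> drop (s + size u) w = rest.
Proof. by move=> drop_w; rewrite addnC -drop_drop drop_w drop_size_cat. Qed.

Lemma tq_round_Ww s l n r jj (rest : word) : size jj = r ->
  drop s w = vw l ++ wpow (Uw n) r ++ vw l ++ rest ->
  tq (s + size (vw l) + size (wpow (Uw n) r)) =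
    iota s (size (vw l)) ++ tq (s + size (vw l) + size (wpow (Uw n) r) + size (vw l)) ->
  0 < r -> queue_at w tq s = Ww jj ->
  (forall j, j \in jj -> j <= n) /\
  queue_at w tq (s + size (vw l) + size (wpow (Uw n) r) + size (vw l)) =
    Ww [seq n - j | j <- jj].
Proof.
move=> <-; set v := vw l; set D := wpow _ _ => drop_w pops size_gt0 queue_s.
have [q0 [Q [tq_s q0_a1]]] : exists q0 Q, tq s = q0 :: Q /\ nth a1 w q0 = a1.
  move: size_gt0 queue_s; rewrite /queue_at; case: (jj) => // i jj' _; rewrite Ww_cons.
  by case: (tq s) => // q0 Q [q0_a1 _]; exists q0, Q.
have q0_v : nth a1 w q0 \notin v by rewrite q0_a1 a1_notin_vw.
have pushes := tq_push_run drop_w tq_s q0_v.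
have iota_v : iota s (size v) = s :: iota s.+1 (size v).-1 by rewrite /v size_vw.
have s_c1 : nth a1 w s = c1 by rewrite -[s]addn0 (drop_nth drop_w) // /v size_vw.
have tq_D : tq (s + size v) = (q0 :: Q) ++ s :: iota s.+1 (size v).-1.
  by rewrite pushes iota_v.
have tq_e : tq (s + size v + size D) =
    s :: iota s.+1 (size v).-1 ++ tq (s + size v + size D + size v).
  by rewrite pops iota_v.
have c1_D : nth a1 w s \notin D by rewrite s_c1 c1_notin_wpow ?c1_notin_Uw.
have c1_W : nth a1 w s \notin map (nth a1 w) (q0 :: Q).
  by rewrite s_c1 -tq_s -/(queue_at w tq s) queue_s c1_notin_Ww.
have [mb [size_mb mask_W mask_R]] := tq_pass (drop_shift drop_w) tq_D tq_e c1_D c1_W.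
move: mask_W; rewrite -tq_s -/(queue_at w tq s) queue_s => mask_W.
have [le_jj <-] := mask_wpowUw_Ww size_mb mask_W.
by split; last rewrite mask_R.
Qed.

End Computation.

Lemma VCondition_pops m S tq l s s' : VCondition m S tq -> 1 <= l <= 12 * m ->
  first_occ (wS m S) (vw l) = s -> second_occ (wS m S) (vw l) = s' ->
  tq s' = iota s (size (vw l)) ++ tq (s' + size (vw l)).
Proof.
move=> vcond rng_l first_s second_s'.
suff: forall j, j <= size (vw l) -> tq s' = iota s j ++ tq (s' + j) by apply.
elim=> [|j IH] lt_j; first by rewrite addn0.
have := vcond l rng_l j lt_j; rewrite /matched first_s second_s' => pop.
by rewrite IH ?(ltnW lt_j) // pop addnS -[j.+1]addn1 iotaD -catA.
Qed.

Lemma VCondition_matched_vw m S tq l s s' (rest rest' : word) :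
  VCondition m S tq -> 1 <= l <= 12 * m ->
  drop s (wS m S) = vw l ++ rest -> drop s' (wS m S) = vw l ++ rest' ->
  s + size (vw l) <= s' ->
  tq s' = iota s (size (vw l)) ++ tq (s' + size (vw l)).
Proof.
move=> vcond rng_l drop_s drop_s' le_ss'.
have lt_ss' : s < s' by move: le_ss'; rewrite size_vw; lia.
have occ_s' := occurs_at_drop drop_s'.
have vw_gt0 : 0 < size (vw l) by rewrite size_vw.
have lt_s'w : s' < size (wS m S).
  by apply: leq_trans (occurs_at_size vw_gt0 occ_s'); rewrite -addn1 leq_add2l.
have [first_s second_s'] :=
  first_second_occ (occurs_vw_wS S rng_l) (occurs_at_drop drop_s) occ_s' lt_ss' lt_s'w.
exact: VCondition_pops vcond rng_l first_s second_s'.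
Qed.

Lemma accepting_Xw m S k (ii : seq nat) tq t (T W' : word) :
  1 <= k <= 3 * m -> size ii = 3 * m - k + 1 ->
  accepting (wS m S) tq -> VCondition m S tq ->
  config_at (wS m S) tq t = (Ww ii, Xw m S k ++ T) ->
  config_at (wS m S) tq (t + size (Xw m S k)) = (W', T) ->
  W' = Ww ii /\ (forall j, j \in ii -> j <= nS S k).
Proof.
move=> rng_k size_ii [_ _ valid] vcond /pair_equal_spec [queue_t drop_t].
move=> /pair_equal_spec [queue_e _].
set n := nS S k; set r := size ii.
have D_r : Dw m S k = wpow (Uw n) r by rewrite /r size_ii.
have size_X : size (Xw m S k) = size (vw (4 * k - 3)) + size (wpow (Uw n) r) +
    size (vw (4 * k - 3)) + size (vw (4 * k - 2)) + size (wpow (Uw n) r) + size (vw (4 * k - 2)).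
  by rewrite -[Xw m S k]cats0 Xw_catE D_r !size_cat /= addn0 !addnA.
rewrite Xw_catE D_r in drop_t.
have drop_t2 := drop_shift (drop_shift drop_t).
have drop_t3 := drop_shift drop_t2.
have drop_t4 := drop_shift (drop_shift drop_t3).
have rng1 : 1 <= 4 * k - 3 <= 12 * m by lia.
have rng2 : 1 <= 4 * k - 2 <= 12 * m by lia.
have pops1 := VCondition_matched_vw vcond rng1 drop_t drop_t2 (leq_addr _ _).
have pops2 := VCondition_matched_vw vcond rng2 drop_t3 drop_t4 (leq_addr _ _).
have r_gt0 : 0 < r by rewrite /r size_ii addn1.
have [le_ii queue_t3] := tq_round_Ww valid (erefl r) drop_t pops1 r_gt0 queue_t.
have [_] := tq_round_Ww valid (size_map _ ii) drop_t3 pops2 r_gt0 queue_t3.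
rewrite map_subnK // -queue_e size_X !addnA => ->.
by split.
Qed.

Theorem lemma6 (m : nat) (S : seq nat) (k : nat) (ii : seq nat) :
  is3Part m S -> 1 <= k <= 3 * m -> size ii = 3 * m - k + 1 ->
  (forall (tq : nat -> seq nat) (t : nat) (T W' : seq sym),
      accepting (wS m S) tq -> VCondition m S tq ->
      config_at (wS m S) tq t = (Ww ii, Xw m S k ++ T) ->
      config_at (wS m S) tq (t + size (Xw m S k)) = (W', T) ->
      W' = Ww ii /\ (forall j, j \in ii -> j <= nS S k))
  /\
  ((forall j, j \in ii -> j <= nS S k) ->
      forall T : seq sym, steps (Ww ii, Xw m S k ++ T) (Ww ii, T)).
Proof.
move=> _ rng_k size_ii; split.
- by move=> tq t T W'; apply: accepting_Xw.
- exact: steps_Xw.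
Qed.
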